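(* Let $f:X\to X$, $X=[c_0,c_N]$, satisfy properties P1–P6 (with slope $\lambda\in(0,1)$), let $\{\xi_r\}_{r\in\mathbb{N}}$ be a well-cutting orbit of $f$, and define $\phi:[c_0,c_N]\to\mathbb{R}$ by $\phi(x)=x+\sum_{n\in\mathcal{N}(x)}\lambda^n$, where $\mathcal{N}(x):=\{n\geqslant1:\xi_n<x\}$. Then $\phi$ is strictly increasing, left-continuous on $[c_0,c_N]$, continuous on $[c_0,c_N]\setminus\{\xi_r\}_{r\geqslant1}$, and $\lim_{x\searrow\xi_r}\phi(x)=\phi(\xi_r)+\lambda^r$ for all $r\geqslant 1$. Moreover, \[ \phi([c_0,c_N])=[\phi(c_0),\phi(c_N)]\setminus\bigcup_{r=1}^\infty G_r,\qquad G_r:=(\phi(\xi_r),\phi(\xi_r)+\lambda^r]\ (r\geqslant 1), \] and $\overline{G_r}\cap\overline{G_l}=\emptyset$ for all $r\neq l$.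
   Context: Setting: $N\geqslant 2$, $c_0<c_1<\dots<c_N$, $X=[c_0,c_N]$, $X_1=[c_0,c_1)$, $X_i=(c_{i-1},c_i)$ for $1<i<N$, $X_N=(c_{N-1},c_N]$; $\Delta:=\{c_1,\dots,c_{N-1}\}$; $f_i$ is the continuous extension of $f|_{X_i}$ to $\overline{X_i}$; $\widetilde X:=\bigcap_{n\geqslant0}f^{-n}(X\setminus\Delta)$. Atoms: $F_i(A):=\overline{f(A\cap X_i)}$, $A_{i_1\dots i_n}:=F_{i_n}\circ\dots\circ F_{i_1}(X)$ is an atom of generation $n$ if non-empty, $\mathcal{A}_n$ their set, $\mathcal{A}_n(x):=\{A\in\mathcal{A}_n:\exists t\in\mathbb{N},f^{t+n}(x)\in A\}$; attractor $\Lambda:=\bigcap_{n\geqslant1}\bigcup_{A\in\mathcal{A}_n}A$. $\Delta_{lr}(x)$ is the set of $c_i\in\Delta$ such that for every $n\geqslant1$ there is $A\in\mathcal{A}_n(x)$ with $c_i\in A$, $f^{t+n}(x)\in A\cap X_i$ and $f^{t'+n}(x)\in A\cap X_{i+1}$ for some $t,t'\in\mathbb{N}$. P1: $f$ is discontinuous at every point of $\Delta$, and $f|_{X_i}$ is affine with slope $\lambda\in(0,1)$ for every $i$. P2 (separation): each $f_i$ injective and $f_i(\overline{X_i})\cap f_j(\overline{X_j})=\emptyset$ for $i\neq j$. P3: $\Lambda$ is a Cantor set. P4: $\bigcup_{i=1}^{N-1}\{f_i(c_i),f_{i+1}(c_i)\}\subset\widetilde X$. P5: for some $i$, $\{f^n(f_i(c_i))\}_n$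 or $\{f^n(f_{i+1}(c_i))\}_n$ is dense in $\Lambda$. P6: $c_i\in\Delta_{lr}(x)$ for all $x\in\widetilde X$ and all $i\in\{1,\dots,N-1\}$. A well-cutting orbit of $f$ is an orbit $\{\xi_r\}_{r\in\mathbb{N}}$, $\xi_r=f^r(\xi_0)$, with $\xi_0\in\Lambda\cap\widetilde X$, containing no point of: (1) the boundary points of the gaps of the Cantor set $\Lambda$; (2) the forward orbits of $c_0$ and $c_N$; (3) the forward orbits of $f_i(c_i)$ and $f_{i+1}(c_i)$ for $i\in\{1,\dots,N-1\}$. *)

From Stdlib Require Import Reals Lra List.
From Coquelicot Require Import Coquelicot.
Open Scope R_scope.

Fixpoint fiter (n : nat) (f : R -> R) (x : R) : R :=
  match n with O => x | S m => f (fiter m f x) end.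

Definition cl (A : R -> Prop) (x : R) : Prop :=
  forall eps, 0 < eps -> exists y, A y /\ Rabs (y - x) < eps.

Definition inX (c : nat -> R) (N : nat) (x : R) : Prop := c 0%nat <= x <= c N.

(* X_1 = [c0,c1), X_i = (c_{i-1},c_i) (1<i<N), X_N = (c_{N-1},c_N] *)
Definition inXi (c : nat -> R) (N i : nat) (x : R) : Prop :=
  (if Nat.eqb i 1 then c 0%nat <= x else c (i - 1)%nat < x) /\
  (if Nat.eqb i N then x <= c N else x < c i).

Definition inDelta (c : nat -> R) (N : nat) (x : R) : Prop :=
  exists i, (1 <= i <= N - 1)%nat /\ x = c i.

(* f_i : continuous extension of f|X_i to closure(X_i) = [c_{i-1}, c_i].
   Under P1 (f affine with slope lam on X_i) it is the affine map below,
   written through the midpoint m_i of X_i. *)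
Definition fext (c : nat -> R) (f : R -> R) (lam : R) (i : nat) (x : R) : R :=
  let m := (c (i - 1)%nat + c i) / 2 in f m + lam * (x - m).

Definition Fset (c : nat -> R) (N : nat) (f : R -> R) (i : nat) (A : R -> Prop)
  : R -> Prop :=
  cl (fun y => exists x, A x /\ inXi c N i x /\ y = f x).

(* A_{i1...in} = F_{in} o ... o F_{i1} (X), word w = [i1; ...; in] *)
Definition atom (c : nat -> R) (N : nat) (f : R -> R) (w : list nat) : R -> Prop :=
  List.fold_left (fun (A : R -> Prop) (i : nat) => Fset c N f i A) w (inX c N).

Definition valid_word (N : nat) (w : list nat) : Prop :=
  List.Forall (fun i => (1 <= i <= N)%nat) w.

Definition Lam (c : nat -> R) (N : nat) (f : R -> R) (x : R) : Prop :=
  forall n, (1 <= n)%nat ->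
    exists w, length w = n /\ valid_word N w /\ atom c N f w x.

Definition Xt (c : nat -> R) (N : nat) (f : R -> R) (x : R) : Prop :=
  forall n, inX c N (fiter n f x) /\ ~ inDelta c N (fiter n f x).

Definition Dlr (c : nat -> R) (N : nat) (f : R -> R) (x : R) (i : nat) : Prop :=
  forall n, (1 <= n)%nat ->
    exists w, length w = n /\ valid_word N w /\ atom c N f w (c i) /\
      (exists t, atom c N f w (fiter (t + n) f x) /\ inXi c N i (fiter (t + n) f x)) /\
      (exists t', atom c N f w (fiter (t' + n) f x) /\
                  inXi c N (i + 1) (fiter (t' + n) f x)).

Definition is_cantor (S : R -> Prop) : Prop :=
  (exists x, S x) /\
  (forall x, cl S x -> S x) /\
  (exists M, forall x, S x -> Rabs x <= M) /\
  (forall x, S x -> forall eps, 0 < eps ->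
      exists y, S y /\ y <> x /\ Rabs (y - x) < eps) /\
  (forall a b, a < b -> ~ (forall y, a <= y <= b -> S y)).

Definition gap_endpoint (S : R -> Prop) (x : R) : Prop :=
  exists a b, a < b /\ S a /\ S b /\ (forall y, a < y < b -> ~ S y) /\
              (x = a \/ x = b).

Definition P1 (c : nat -> R) (N : nat) (f : R -> R) (lam : R) : Prop :=
  (forall i, (1 <= i <= N - 1)%nat -> ~ continuity_pt f (c i)) /\
  (0 < lam < 1) /\
  (forall i, (1 <= i <= N)%nat ->
     exists b, forall x, inXi c N i x -> f x = lam * x + b).

Definition P2 (c : nat -> R) (N : nat) (f : R -> R) (lam : R) : Prop :=
  (forall i, (1 <= i <= N)%nat -> forall x y,
     c (i - 1)%nat <= x <= c i -> c (i - 1)%nat <= y <= c i ->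
     fext c f lam i x = fext c f lam i y -> x = y) /\
  (forall i j, (1 <= i <= N)%nat -> (1 <= j <= N)%nat -> i <> j ->
     forall x y, c (i - 1)%nat <= x <= c i -> c (j - 1)%nat <= y <= c j ->
     fext c f lam i x <> fext c f lam j y).

Definition P3 (c : nat -> R) (N : nat) (f : R -> R) : Prop := is_cantor (Lam c N f).

Definition P4 (c : nat -> R) (N : nat) (f : R -> R) (lam : R) : Prop :=
  forall i, (1 <= i <= N - 1)%nat ->
    Xt c N f (fext c f lam i (c i)) /\ Xt c N f (fext c f lam (i + 1) (c i)).

Definition dense_orbit_in (f : R -> R) (z : R) (S : R -> Prop) : Prop :=
  forall y, S y -> forall eps, 0 < eps -> exists n, Rabs (fiter n f z - y) < eps.

Definition P5 (c : nat -> R) (N : nat) (f : R -> R) (lam : R) : Prop :=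
  exists i, (1 <= i <= N - 1)%nat /\
    (dense_orbit_in f (fext c f lam i (c i)) (Lam c N f) \/
     dense_orbit_in f (fext c f lam (i + 1) (c i)) (Lam c N f)).

Definition P6 (c : nat -> R) (N : nat) (f : R -> R) : Prop :=
  forall x, Xt c N f x -> forall i, (1 <= i <= N - 1)%nat -> Dlr c N f x i.

Definition well_cutting (c : nat -> R) (N : nat) (f : R -> R) (lam : R)
  (xi : nat -> R) : Prop :=
  (forall r, xi r = fiter r f (xi 0%nat)) /\
  Lam c N f (xi 0%nat) /\ Xt c N f (xi 0%nat) /\
  (forall r, ~ gap_endpoint (Lam c N f) (xi r)) /\
  (forall r m, xi r <> fiter m f (c 0%nat) /\ xi r <> fiter m f (c N)) /\
  (forall r m i, (1 <= i <= N - 1)%nat ->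
     xi r <> fiter m f (fext c f lam i (c i)) /\
     xi r <> fiter m f (fext c f lam (i + 1) (c i))).

Definition phi (lam : R) (xi : nat -> R) (x : R) : R :=
  x + Series (fun n => match n with
                       | O => 0
                       | S _ => if Rlt_dec (xi n) x then lam ^ n else 0
                       end).

Definition Gr (lam : R) (xi : nat -> R) (r : nat) (y : R) : Prop :=
  phi lam xi (xi r) < y <= phi lam xi (xi r) + lam ^ r.

From Stdlib Require Import Reals Lra Lia Classical_Prop.
From Coquelicot Require Import Coquelicot.
Open Scope R_scope.

(* phi is the identity plus the distribution function of the measure
   sum_(n >= 1) lam^n delta_(xi n), taken with strict inequality, so it is
   strictly increasing and left-continuous.  If the xi n (n >= 1) are pairwise
   distinct, then near any point p all indices n >= K carry total weight at
   most lam^K / (1 - lam), while the finitely many xi n with n < K other than p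
   itself can be kept at a positive distance from p; hence phi is continuous
   off the orbit and jumps by exactly lam^r at xi r.  A supremum argument then
   identifies the image, and the closed gaps are disjoint because
   phi (xi l) >= phi (xi r) + lam^r + (xi l - xi r) whenever xi r < xi l.

   Distinctness of the orbit points is the only place where the dynamics
   enters:
   by P6 the orbit of a point of X~ meets, for every n, an atom of generation n
   containing c_1, and by P1 such an atom has diameter at most
   lam^n (c_N - c_0).  So the orbit accumulates at c_1, which it never hits,
   and therefore it cannot be eventually periodic. *)

Lemma pow_eventually_small lam C eps : 0 <= lam < 1 -> 0 < eps ->
  exists K, forall n, (K <= n)%nat -> lam ^ n * C < eps.
Proof.
  intros Hlam He.
  assert (HC : 0 <= Rabs C) by apply Rabs_pos.
  destruct (pow_lt_1_zero lam ltac:(rewrite Rabs_right; lra) (eps / (Rabs C + 1)))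
    as [K HK]; [apply Rdiv_lt_0_compat; lra|].
  exists K. intros n Hn. specialize (HK n Hn).
  apply Rle_lt_trans with (Rabs (lam ^ n) * Rabs C).
  { rewrite <- Rabs_mult. apply RRle_abs. }
  apply Rle_lt_trans with (eps / (Rabs C + 1) * Rabs C).
  { apply Rmult_le_compat_r; lra. }
  replace (eps / (Rabs C + 1) * Rabs C) with (eps - eps / (Rabs C + 1)) by (field; lra).
  assert (0 < eps / (Rabs C + 1)) by (apply Rdiv_lt_0_compat; lra). lra.
Qed.

Lemma finite_points_sep (g : nat -> R) p K : exists d, 0 < d /\
  forall n, (n < K)%nat -> g n <> p -> d <= Rabs (g n - p).
Proof.
  induction K as [|K [d [Hd IH]]].
  - exists 1. split; [lra|]. intros; lia.
  - destruct (Req_dec (g K) p) as [E|E].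
    + exists d. split; [exact Hd|]. intros n Hn Hne.
      destruct (Nat.eq_dec n K); [subst; contradiction|]. apply IH; [lia|exact Hne].
    + exists (Rmin d (Rabs (g K - p))). split.
      { apply Rmin_pos; [exact Hd|]. apply Rabs_pos_lt. lra. }
      intros n Hn Hne. destruct (Nat.eq_dec n K) as [->|]; [apply Rmin_r|].
      eapply Rle_trans; [apply Rmin_l|]. apply IH; [lia|exact Hne].
Qed.

Lemma left_continuous_attains (g : R -> R) a b y :
  a <= b -> g a <= y <= g b ->
  (forall x eps, 0 < eps -> exists d, 0 < d /\
     forall s, x - d < s <= x -> Rabs (g s - g x) < eps) ->
  (forall m, a <= m < b -> g m < y -> exists z, m < z <= b /\ g z <= y) ->
  exists x, a <= x <= b /\ g x = y.
Proof.
  intros Hab Hy Hleft Hstep.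
  set (E := fun x => a <= x <= b /\ g x <= y).
  destruct (completeness E) as [m [Hub Hlub]].
  { exists b. intros x [Hx _]. lra. }
  { exists a. split; [lra|apply Hy]. }
  assert (Ham : a <= m) by (apply Hub; split; [lra|apply Hy]).
  assert (Hmb : m <= b) by (apply Hlub; intros x [Hx _]; lra).
  assert (Hgm : g m <= y).
  { apply Rnot_lt_le. intros Hlt.
    destruct (Hleft m (g m - y)) as [d [Hd Hd']]; [lra|].
    destruct (classic (exists s, E s /\ m - d < s)) as [[s [[Hs Hgs] Hsd]]|Hno].
    - assert (s <= m) by (apply Hub; split; assumption).
      specialize (Hd' s ltac:(lra)). apply Rabs_def2 in Hd'. lra.
    - assert (m <= m - d); [|lra].
      apply Hlub. intros s Es. apply Rnot_lt_le. intros Hs. apply Hno. eauto. }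
  destruct (Req_dec (g m) y) as [Eq|Ne]; [exists m; split; [lra|exact Eq]|].
  assert (Hmb' : m < b) by (destruct (Req_dec m b) as [->|]; lra).
  destruct (Hstep m ltac:(lra) ltac:(lra)) as [z [Hz Hgz]].
  assert (z <= m) by (apply Hub; split; [lra|exact Hgz]). lra.
Qed.

Lemma cl_Icc (A : R -> Prop) a b y :
  (forall z, A z -> a <= z <= b) -> cl A y -> a <= y <= b.
Proof.
  intros HA Hy. split; apply Rnot_lt_le; intros Hlt.
  - destruct (Hy (a - y)) as [z [Az Hz]]; [lra|].
    apply HA in Az. apply Rabs_def2 in Hz. lra.
  - destruct (Hy (y - b)) as [z [Az Hz]]; [lra|].
    apply HA in Az. apply Rabs_def2 in Hz. lra.
Qed.

Definition seq_single (r : nat) (v : R) (n : nat) : R := if Nat.eq_dec n r then v else 0.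

Lemma is_series_zero : is_series (fun _ : nat => 0) 0.
Proof.
  apply (filterlim_ext (fun _ => 0)); [intros n; rewrite sum_n_const; ring|].
  apply filterlim_const.
Qed.

Lemma is_series_single r v : is_series (seq_single r v) v.
Proof.
  revert v; induction r as [|r IH]; intros v; apply is_series_decr_1; unfold seq_single.
  - destruct (Nat.eq_dec 0 0) as [_|]; [|lia].
    match goal with |- is_series _ ?l => replace l with 0 by (unfold plus, opp; simpl; ring) end.
    apply (is_series_ext (fun _ => 0)); [intros n; destruct Nat.eq_dec; [lia|reflexivity]|].
    exact is_series_zero.
  - destruct (Nat.eq_dec 0 (S r)) as [|_]; [lia|].
    match goal with |- is_series _ ?l => replace l with v by (unfold plus, opp; simpl; ring) end.
    apply (is_series_ext (seq_single r v)); [intros n; unfold seq_single|apply IH].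
    repeat destruct Nat.eq_dec; lia || reflexivity.
Qed.

Section GeomDominated.

Variable lam : R.
Hypothesis Hlam : 0 <= lam < 1.

Definition geom_dominated (a : nat -> R) : Prop := forall n, 0 <= a n <= lam ^ n.

Lemma ex_series_geom_dominated a : geom_dominated a -> ex_series a.
Proof.
  intros Ha. apply (ex_series_le a (fun n => lam ^ n)).
  - intros n. destruct (Ha n). rewrite Rabs_right; lra.
  - apply ex_series_geom. rewrite Rabs_right; lra.
Qed.

Lemma geom_dominated_drop a r :
  geom_dominated a -> geom_dominated (fun n => a n - seq_single r (a r) n).
Proof.
  intros Ha n. unfold seq_single. destruct Nat.eq_dec as [->|].
  - pose proof (pow_le lam r (proj1 Hlam)). lra.
  - rewrite Rminus_0_r. apply Ha.
Qed.

Lemma Series_drop_term a r : geom_dominated a ->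
  Series a = a r + Series (fun n => a n - seq_single r (a r) n).
Proof.
  intros Ha. rewrite Series_minus.
  - rewrite (is_series_unique _ _ (is_series_single r (a r))). ring.
  - exact (ex_series_geom_dominated a Ha).
  - eexists. apply is_series_single.
Qed.

Lemma Series_geom_dominated_ge_term a r : geom_dominated a -> a r <= Series a.
Proof.
  intros Ha. rewrite (Series_drop_term a r Ha).
  assert (Series (fun _ => 0) <= Series (fun n => a n - seq_single r (a r) n)).
  { apply Series_le.
    - intros n. split; [lra|]. apply (geom_dominated_drop a r Ha).
    - apply ex_series_geom_dominated, geom_dominated_drop, Ha. }
  rewrite (is_series_unique _ _ is_series_zero) in H. lra.
Qed.

Lemma Series_geom_dominated_tail a K : geom_dominated a ->
  (forall n, (n < K)%nat -> a n = 0) -> Series a <= lam ^ K / (1 - lam).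
Proof.
  intros Ha Hzero. rewrite (Series_incr_n_aux a K Hzero).
  apply Rle_trans with (Series (fun k => lam ^ K * lam ^ k)).
  - apply Series_le.
    + intros k. rewrite <- pow_add. apply Ha.
    + apply (ex_series_scal_l (lam ^ K) (fun k => lam ^ k)).
      apply ex_series_geom. rewrite Rabs_right; lra.
  - rewrite Series_scal_l, Series_geom by (rewrite Rabs_right; lra). right. reflexivity.
Qed.

Lemma Series_geom_dominated_le_except a r K : geom_dominated a ->
  (forall n, (n < K)%nat -> n <> r -> a n = 0) ->
  Series a <= a r + lam ^ K / (1 - lam).
Proof.
  intros Ha Hzero. rewrite (Series_drop_term a r Ha).
  apply Rplus_le_compat_l, Series_geom_dominated_tail; [apply geom_dominated_drop, Ha|].
  intros n Hn. unfold seq_single. destruct Nat.eq_dec as [->|Hnr]; [ring|].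
  rewrite Hzero by assumption. ring.
Qed.

End GeomDominated.

Definition phi_term (lam : R) (xi : nat -> R) (x : R) (n : nat) : R :=
  match n with O => 0 | S _ => if Rlt_dec (xi n) x then lam ^ n else 0 end.

Section Phi.

Variables (lam : R) (xi : nat -> R).
Hypothesis Hlam : 0 < lam < 1.

Let Hlam' : 0 <= lam < 1.
Proof. lra. Qed.

Lemma phi_term_incr_cases x y n : x <= y ->
  phi_term lam xi y n - phi_term lam xi x n = 0 \/
  ((1 <= n)%nat /\ x <= xi n < y /\
   phi_term lam xi y n - phi_term lam xi x n = lam ^ n).
Proof.
  intros Hxy. destruct n as [|n]; simpl; [left; ring|].
  destruct (Rlt_dec (xi (S n)) y), (Rlt_dec (xi (S n)) x).
  - left; ring.
  - right. split; [lia|]. split; [lra|]. ring.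
  - lra.
  - left; ring.
Qed.

Lemma geom_dominated_phi_incr x y : x <= y ->
  geom_dominated lam (fun n => phi_term lam xi y n - phi_term lam xi x n).
Proof.
  intros Hxy n. pose proof (pow_le lam n (proj1 Hlam')).
  destruct (phi_term_incr_cases x y n Hxy) as [E|[_ [_ E]]]; rewrite E; lra.
Qed.

Lemma geom_dominated_phi_term x : geom_dominated lam (phi_term lam xi x).
Proof.
  intros n. pose proof (pow_le lam n (proj1 Hlam')).
  destruct n as [|n]; simpl; [lra|]. destruct Rlt_dec; simpl in *; lra.
Qed.

Lemma phi_sub x y : x <= y ->
  phi lam xi y - phi lam xi x =
  (y - x) + Series (fun n => phi_term lam xi y n - phi_term lam xi x n).
Proof.
  intros Hxy. unfold phi. fold (phi_term lam xi y) (phi_term lam xi x).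
  rewrite Series_minus
    by apply (ex_series_geom_dominated lam Hlam'), geom_dominated_phi_term.
  ring.
Qed.

Lemma phi_lt x y : x < y -> phi lam xi x < phi lam xi y.
Proof.
  intros Hxy. pose proof (phi_sub x y (Rlt_le _ _ Hxy)).
  pose proof (Series_geom_dominated_ge_term lam Hlam' _ 0
    (geom_dominated_phi_incr x y (Rlt_le _ _ Hxy))).
  simpl in *. lra.
Qed.

Lemma phi_le x y : x <= y -> phi lam xi x <= phi lam xi y.
Proof.
  intros Hxy. destruct (Rle_lt_or_eq_dec x y Hxy) as [Hlt| ->]; [|lra].
  apply Rlt_le, phi_lt, Hlt.
Qed.

Lemma phi_jump r y : (1 <= r)%nat -> xi r < y ->
  phi lam xi (xi r) + lam ^ r + (y - xi r) <= phi lam xi y.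
Proof.
  intros Hr Hy. pose proof (phi_sub (xi r) y (Rlt_le _ _ Hy)).
  pose proof (Series_geom_dominated_ge_term lam Hlam' _ r
    (geom_dominated_phi_incr (xi r) y (Rlt_le _ _ Hy))).
  assert (Hr' : phi_term lam xi y r - phi_term lam xi (xi r) r = lam ^ r).
  { destruct r as [|r]; [lia|]. simpl.
    destruct (Rlt_dec (xi (S r)) y), (Rlt_dec (xi (S r)) (xi (S r))); lra. }
  lra.
Qed.

Lemma phi_increment_near p r eps :
  (forall n, (1 <= n)%nat -> xi n = p -> n = r) -> 0 < eps ->
  exists d, 0 < d /\ forall x y, p - d < x -> x <= y -> y < p + d ->
    phi lam xi y - phi lam xi x < phi_term lam xi y r - phi_term lam xi x r + eps.
Proof.
  intros Hr He.
  destruct (pow_eventually_small lam (/ (1 - lam)) (eps / 2) Hlam') as [K HK]; [lra|].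
  specialize (HK K (le_n K)).
  destruct (finite_points_sep xi p K) as [d0 [Hd0 Hsep]].
  exists (Rmin d0 (eps / 4)). split; [apply Rmin_pos; lra|].
  intros x y Hx Hxy Hy.
  pose proof (Rmin_l d0 (eps / 4)). pose proof (Rmin_r d0 (eps / 4)).
  (* An index n < K contributes only if xi n lies in [x, y), hence within d0
     of p; by the choice of d0 this forces xi n = p, i.e. n = r. *)
  assert (Hzero : forall n, (n < K)%nat -> n <> r ->
            phi_term lam xi y n - phi_term lam xi x n = 0).
  { intros n Hn Hnr.
    destruct (phi_term_incr_cases x y n Hxy) as [E|[Hn1 [Hxn _]]]; [exact E|].
    exfalso. apply Hnr, Hr; [exact Hn1|].
    destruct (Req_dec (xi n) p) as [E|E]; [exact E|].
    specialize (Hsep n Hn E).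
    assert (Rabs (xi n - p) < d0) by (apply Rabs_def1; lra). lra. }
  pose proof (Series_geom_dominated_le_except lam Hlam' _ r K
    (geom_dominated_phi_incr x y Hxy) Hzero).
  rewrite phi_sub by exact Hxy. unfold Rdiv in *. lra.
Qed.

Lemma phi_continuous_off_orbit x : (forall r, (1 <= r)%nat -> x <> xi r) ->
  forall eps, 0 < eps -> exists d, 0 < d /\
    forall y, Rabs (y - x) < d -> Rabs (phi lam xi y - phi lam xi x) < eps.
Proof.
  intros Hx eps He.
  destruct (phi_increment_near x 0 eps) as [d [Hd Hnear]];
    [intros n Hn E; exfalso; exact (Hx n Hn (eq_sym E))|exact He|].
  exists d. split; [exact Hd|]. intros y Hy. apply Rabs_def2 in Hy. simpl in Hnear.
  destruct (Rle_dec y x) as [Hyx|Hxy].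
  - specialize (Hnear y x ltac:(lra) Hyx ltac:(lra)). pose proof (phi_le y x Hyx).
    rewrite Rabs_left1; lra.
  - specialize (Hnear x y ltac:(lra) ltac:(lra) ltac:(lra)). pose proof (phi_le x y ltac:(lra)).
    rewrite Rabs_right; lra.
Qed.

Hypothesis Hinj : forall r l, (1 <= r)%nat -> (1 <= l)%nat -> xi r = xi l -> r = l.

Lemma phi_left_continuous x eps : 0 < eps -> exists d, 0 < d /\
  forall y, x - d < y <= x -> Rabs (phi lam xi y - phi lam xi x) < eps.
Proof.
  intros He.
  assert (Hidx : exists r, phi_term lam xi x r = 0 /\
                   forall n, (1 <= n)%nat -> xi n = x -> n = r).
  { destruct (classic (exists r, (1 <= r)%nat /\ xi r = x)) as [[r [Hr Er]]|Hno].
    - exists r. split.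
      + destruct r as [|r]; [lia|]. simpl. destruct Rlt_dec; lra.
      + intros n Hn En. apply Hinj; congruence.
    - exists 0%nat. split; [reflexivity|]. intros n Hn En. exfalso. eauto. }
  destruct Hidx as [r [Hxr Hr]].
  destruct (phi_increment_near x r eps Hr He) as [d [Hd Hnear]].
  exists d. split; [exact Hd|]. intros y Hy.
  specialize (Hnear y x ltac:(lra) (proj2 Hy) ltac:(lra)).
  pose proof (phi_le y x (proj2 Hy)). pose proof (geom_dominated_phi_term y r).
  rewrite Rabs_left1; lra.
Qed.

Lemma phi_right_limit r : (1 <= r)%nat -> forall eps, 0 < eps -> exists d, 0 < d /\
  forall y, xi r < y < xi r + d ->
    Rabs (phi lam xi y - (phi lam xi (xi r) + lam ^ r)) < eps.
Proof.
  intros Hr eps He.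
  destruct (phi_increment_near (xi r) r eps) as [d [Hd Hnear]];
    [intros n Hn En; apply Hinj; assumption|exact He|].
  exists d. split; [exact Hd|]. intros y Hy.
  specialize (Hnear (xi r) y ltac:(lra) ltac:(lra) ltac:(lra)).
  pose proof (phi_jump r y Hr (proj1 Hy)).
  destruct r as [|r]; [lia|]. simpl in Hnear.
  destruct (Rlt_dec (xi (S r)) y), (Rlt_dec (xi (S r)) (xi (S r))); try lra.
  rewrite Rabs_right; simpl in *; lra.
Qed.

Lemma phi_image_avoids_gaps x r : (1 <= r)%nat -> ~ Gr lam xi r (phi lam xi x).
Proof.
  intros Hr [Hlo Hhi]. destruct (Rle_dec x (xi r)) as [Hx|Hx].
  - pose proof (phi_le x (xi r) Hx). lra.
  - pose proof (phi_jump r x Hr ltac:(lra)). lra.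
Qed.

Lemma phi_eventually_below_right m y :
  phi lam xi m < y -> (forall r, (1 <= r)%nat -> ~ Gr lam xi r y) ->
  exists d, 0 < d /\ forall z, m < z < m + d -> phi lam xi z < y.
Proof.
  intros Hm Hy.
  destruct (classic (exists r, (1 <= r)%nat /\ m = xi r)) as [[r [Hr ->]]|Hno].
  - assert (Hgap : phi lam xi (xi r) + lam ^ r < y).
    { apply Rnot_le_lt. intros Hle. apply (Hy r Hr). split; assumption. }
    destruct (phi_right_limit r Hr (y - (phi lam xi (xi r) + lam ^ r))) as [d [Hd Hlim]];
      [lra|].
    exists d. split; [exact Hd|]. intros z Hz. specialize (Hlim z Hz).
    apply Rabs_def2 in Hlim. lra.
  - destruct (phi_continuous_off_orbit m) with (eps := y - phi lam xi m)
      as [d [Hd Hcont]]; [intros r Hr E; eauto|lra|].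
    exists d. split; [exact Hd|]. intros z Hz.
    specialize (Hcont z ltac:(apply Rabs_def1; lra)). apply Rabs_def2 in Hcont. lra.
Qed.

Lemma phi_image_onto a b y : a <= b ->
  phi lam xi a <= y <= phi lam xi b -> (forall r, (1 <= r)%nat -> ~ Gr lam xi r y) ->
  exists x, a <= x <= b /\ phi lam xi x = y.
Proof.
  intros Hab Hy Hgaps. apply left_continuous_attains; [exact Hab|exact Hy|..].
  - exact phi_left_continuous.
  - intros m Hm Hpm.
    destruct (phi_eventually_below_right m y Hpm Hgaps) as [d [Hd Hbelow]].
    exists (Rmin (m + d / 2) b). split.
    + split; [apply Rmin_glb_lt; lra|apply Rmin_r].
    + apply Rlt_le, Hbelow. pose proof (Rmin_l (m + d / 2) b).
      split; [apply Rmin_glb_lt|]; lra.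
Qed.

Lemma cl_Gr_disjoint r l y : (1 <= r)%nat -> (1 <= l)%nat -> r <> l ->
  ~ (cl (Gr lam xi r) y /\ cl (Gr lam xi l) y).
Proof.
  assert (Hcl : forall k, cl (Gr lam xi k) y ->
            phi lam xi (xi k) <= y <= phi lam xi (xi k) + lam ^ k).
  { intros k. apply cl_Icc. intros z [Hz1 Hz2]. lra. }
  intros Hr Hl Hrl [Yr Yl]. apply Hcl in Yr, Yl.
  assert (xi r <> xi l) by (intros E; exact (Hrl (Hinj r l Hr Hl E))).
  destruct (Rlt_le_dec (xi r) (xi l)).
  - pose proof (phi_jump r (xi l) Hr ltac:(lra)). lra.
  - pose proof (phi_jump l (xi r) Hl ltac:(lra)). lra.
Qed.

End Phi.

Lemma fiter_add a b f x : fiter (a + b) f x = fiter a f (fiter b f x).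
Proof. induction a as [|a IH]; simpl; congruence. Qed.

Lemma fiter_eventually_periodic f x r l : (r < l)%nat -> fiter r f x = fiter l f x ->
  forall k, exists j, (j < l)%nat /\ fiter k f x = fiter j f x.
Proof.
  intros Hrl E k. induction k as [k IH] using (well_founded_induction Wf_nat.lt_wf).
  destruct (Nat.lt_ge_cases k l) as [Hk|Hk]; [exists k; auto|].
  replace k with ((k - l) + l)%nat by lia.
  rewrite fiter_add, <- E, <- fiter_add. apply IH. lia.
Qed.

Definition diam_le (A : R -> Prop) (D : R) : Prop :=
  forall y z, A y -> A z -> Rabs (y - z) <= D.

Lemma Fset_diam_le c N f lam i A D : 0 <= lam ->
  (exists b, forall x, inXi c N i x -> f x = lam * x + b) ->
  diam_le A D -> diam_le (Fset c N f i A) (lam * D).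
Proof.
  intros Hlam [b Hb] HA y z Hy Hz. apply Rnot_lt_le. intros Hlt.
  set (e := (Rabs (y - z) - lam * D) / 3).
  destruct (Hy e) as [y' [[x1 [A1 [X1 ->]]] Hy']]; [unfold e; lra|].
  destruct (Hz e) as [z' [[x2 [A2 [X2 ->]]] Hz']]; [unfold e; lra|].
  assert (Hfx : Rabs (f x1 - f x2) <= lam * D).
  { rewrite (Hb x1 X1), (Hb x2 X2).
    replace (lam * x1 + b - (lam * x2 + b)) with (lam * (x1 - x2)) by ring.
    rewrite Rabs_mult, (Rabs_right lam) by lra.
    apply Rmult_le_compat_l; [exact Hlam|exact (HA x1 x2 A1 A2)]. }
  pose proof (Rabs_triang (y - f x1) (f x1 - z)).
  pose proof (Rabs_triang (f x1 - f x2) (f x2 - z)).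
  rewrite Rabs_minus_sym in Hy'.
  replace (y - f x1 + (f x1 - z)) with (y - z) in * by ring.
  replace (f x1 - f x2 + (f x2 - z)) with (f x1 - z) in * by ring.
  unfold e in *. lra.
Qed.

Lemma atom_diam_le c N f lam w : 0 <= lam ->
  (forall i, (1 <= i <= N)%nat -> exists b, forall x, inXi c N i x -> f x = lam * x + b) ->
  valid_word N w -> diam_le (atom c N f w) (lam ^ length w * (c N - c 0%nat)).
Proof.
  intros Hlam Haff Hw. unfold atom.
  assert (HX : diam_le (inX c N) (c N - c 0%nat)).
  { intros y z [Hy1 Hy2] [Hz1 Hz2]. apply Rabs_le. lra. }
  revert HX. generalize (inX c N) (c N - c 0%nat).
  induction w as [|i w IH]; intros A D HA; simpl; [rewrite Rmult_1_l; exact HA|].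
  inversion Hw as [|? ? Hi Hw']; subst.
  replace (lam * lam ^ length w * D) with (lam ^ length w * (lam * D)) by ring.
  apply IH; [exact Hw'|]. apply Fset_diam_le; [exact Hlam|apply Haff, Hi|exact HA].
Qed.

Lemma Xt_orbit_approaches_Delta c N f lam x i :
  P1 c N f lam -> P6 c N f -> Xt c N f x -> (1 <= i <= N - 1)%nat ->
  forall eps, 0 < eps -> exists k, Rabs (fiter k f x - c i) < eps.
Proof.
  intros [_ [Hlam Haff]] H6 Hx Hi eps He.
  destruct (Hx 0%nat) as [[Hx0 HxN] _]. simpl in Hx0, HxN.
  destruct (pow_eventually_small lam (c N - c 0%nat) eps) as [n Hn]; [lra|exact He|].
  destruct (H6 x Hx i Hi (S n) ltac:(lia)) as [w [Hlen [Hw [Hci [[t [Ht _]] _]]]]].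
  exists (t + S n)%nat.
  pose proof (atom_diam_le c N f lam w ltac:(lra) Haff Hw _ _ Ht Hci) as Hdiam.
  rewrite Hlen in Hdiam. specialize (Hn (S n) ltac:(lia)). lra.
Qed.

Lemma Xt_orbit_injective c N f lam x : (2 <= N)%nat ->
  P1 c N f lam -> P6 c N f -> Xt c N f x ->
  forall r l, fiter r f x = fiter l f x -> r = l.
Proof.
  intros HN H1 H6 Hx.
  assert (Hlt : forall r l, (r < l)%nat -> fiter r f x <> fiter l f x).
  { intros r l Hrl E.
    destruct (finite_points_sep (fun j => fiter j f x) (c 1%nat) l) as [d [Hd Hsep]].
    destruct (Xt_orbit_approaches_Delta c N f lam x 1 H1 H6 Hx ltac:(lia) d Hd) as [k Hk].
    destruct (fiter_eventually_periodic f x r l Hrl E k) as [j [Hj Ej]].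
    rewrite Ej in Hk. apply (Rlt_not_le _ _ Hk), Hsep; [exact Hj|].
    intros Ec. apply (proj2 (Hx j)). exists 1%nat. split; [lia|exact Ec]. }
  intros r l E. destruct (Nat.lt_total r l) as [H|[H|H]]; [|exact H|];
    exfalso; [exact (Hlt r l H E)|exact (Hlt l r H (eq_sym E))].
Qed.

Theorem lemma8 (N : nat) (c : nat -> R) (f : R -> R) (lam : R) (xi : nat -> R)
  (HN : (2 <= N)%nat)
  (Hc : forall i, (i < N)%nat -> c i < c (S i))
  (HfX : forall x, inX c N x -> inX c N (f x))
  (H1 : P1 c N f lam) (H2 : P2 c N f lam) (H3 : P3 c N f)
  (H4 : P4 c N f lam) (H5 : P5 c N f lam) (H6 : P6 c N f)
  (Hxi : well_cutting c N f lam xi) :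
  (* strictly increasing *)
  (forall x y, inX c N x -> inX c N y -> x < y -> phi lam xi x < phi lam xi y) /\
  (* left-continuous on [c0,cN] *)
  (forall x, inX c N x -> forall eps, 0 < eps -> exists delta, 0 < delta /\
     forall y, inX c N y -> x - delta < y <= x ->
       Rabs (phi lam xi y - phi lam xi x) < eps) /\
  (* continuous on [c0,cN] \ {xi_r}_{r>=1} *)
  (forall x, inX c N x -> (forall r, (1 <= r)%nat -> x <> xi r) ->
     forall eps, 0 < eps -> exists delta, 0 < delta /\
     forall y, inX c N y -> Rabs (y - x) < delta ->
       Rabs (phi lam xi y - phi lam xi x) < eps) /\
  (* right limits at xi_r *)
  (forall r, (1 <= r)%nat -> forall eps, 0 < eps -> exists delta, 0 < delta /\
     forall y, inX c N y -> xi r < y < xi r + delta ->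
       Rabs (phi lam xi y - (phi lam xi (xi r) + lam ^ r)) < eps) /\
  (* image *)
  (forall y, (exists x, inX c N x /\ phi lam xi x = y) <->
     (phi lam xi (c 0%nat) <= y <= phi lam xi (c N) /\
      forall r, (1 <= r)%nat -> ~ Gr lam xi r y)) /\
  (* closures of the G_r pairwise disjoint *)
  (forall r l, (1 <= r)%nat -> (1 <= l)%nat -> r <> l ->
     forall y, ~ (cl (Gr lam xi r) y /\ cl (Gr lam xi l) y)).
Proof.
  destruct Hxi as [Horbit [_ [HXt _]]].
  assert (Hlam : 0 < lam < 1) by apply (proj1 (proj2 H1)).
  assert (Hinj : forall r l, (1 <= r)%nat -> (1 <= l)%nat -> xi r = xi l -> r = l).
  { intros r l _ _. rewrite (Horbit r), (Horbit l). apply (Xt_orbit_injective c N f lam); assumption. }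
  assert (HX : c 0%nat <= c N) by (destruct (HXt 0%nat) as [[? ?] _]; simpl in *; lra).
  split; [|split; [|split; [|split; [|split]]]].
  - intros x y _ _. apply phi_lt; exact Hlam.
  - intros x _ eps He.
    destruct (phi_left_continuous lam xi Hlam Hinj x eps He) as [d [Hd H]].
    exists d. split; [exact Hd|]. intros y _. apply H.
  - intros x _ Hx eps He.
    destruct (phi_continuous_off_orbit lam xi Hlam x Hx eps He) as [d [Hd H]].
    exists d. split; [exact Hd|]. intros y _. apply H.
  - intros r Hr eps He.
    destruct (phi_right_limit lam xi Hlam Hinj r Hr eps He) as [d [Hd H]].
    exists d. split; [exact Hd|]. intros y _. apply H.
  - intros y. split.
    + intros [x [[Hx0 HxN] <-]]. split; [split; apply phi_le; assumption|].
      intros r Hr. apply phi_image_avoids_gaps; assumption.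
    + intros [Hy Hgaps]. apply (phi_image_onto lam xi Hlam Hinj); assumption.
  - intros r l Hr Hl Hrl y. apply cl_Gr_disjoint; assumption.
Qed.
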